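(* The proximity pre-order $\preceq^{\mathrm{edit\text{-}dist}}$ is well-founded and has the finite-basis property.
   Context: CQs are $q(x_1,\dots,x_k)\text{ :- }\alpha_1,\dots,\alpha_n$ (relational atoms, no constants, pairwise distinct answer variables each occurring in an atom) over a fixed finite schema. Canonical example $e_q=(I_q,(x_1,\dots,x_k))$ with facts the atoms of $q$; $\mathrm{core}(e)$ is the core of a data example (the minimal homomorphically equivalent sub-example, unique up to isomorphism). $\mathrm{edit\text{-}dist}(q_1,q_2)=\min_\rho|\mathrm{core}(e_{q_1})\oplus\mathrm{core}(e_{\rho(q_2)})|$ over bijective renamings $\rho$ of the variables of $q_2(y_1,\dots,y_k)$ with $\rho(y_i)=x_i$, $\oplus$ symmetric difference of facts. $q'\preceq^{\mathrm{edit\text{-}dist}}_q q''$ iff $\mathrm{edit\text{-}dist}(q,q')\le\mathrm{edit\text{-}dist}(q,q'')$; $\prec_q$ is the strict part. A proximity pre-order $\preceq$ is well-founded if for each CQ $q$, every non-empty set of CQs has a $\preceq_q$-minimal element; it has the finite-basis property if for each CQ $q$, every set of CQs has only finitely many $\preceq_q$-minimal elements up to equivalence (equivalence: same answers on every instance). *)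

From HB Require Import structures.
From mathcomp Require Import all_boot finmap.
From Stdlib Require Import ClassicalEpsilon.

Set Implicit Arguments.
Unset Strict Implicit.
Unset Printing Implicit Defensive.

Local Open Scope fset_scope.

Record schema := Schema { rsym : finType ; arity : rsym -> nat }.

Section CQs.
Variable sig : schema.

Definition fact := (rsym sig * seq nat)%type.
Definition instance := {fset fact}.

Definition wf_fact (a : fact) : Prop := size a.2 = arity a.1.

(* Conjunctive queries of arity k: pairwise distinct answer variables, each
   occurring in some atom; atoms are well-formed; no constants. *)
Record CQ (k : nat) := MkCQ {
  cq_head : k.-tuple nat ;
  cq_body : instance ;
  cq_head_uniq : uniq cq_head ;
  cq_head_occ : forall x, x \in cq_head -> exists2 a, a \in cq_body & x \in a.2 ;
  cq_body_wf : forall a, a \in cq_body -> wf_fact a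
}.

Definition cq_vars k (q : CQ k) (x : nat) : Prop :=
  exists2 a, a \in cq_body q & x \in a.2.

Definition data_example (k : nat) := (instance * k.-tuple nat)%type.

Definition canonical_example k (q : CQ k) : data_example k := (cq_body q, cq_head q).

Definition is_hom k (h : nat -> nat) (e e' : data_example k) : Prop :=
  (forall a, a \in e.1 -> (a.1, map h a.2) \in e'.1) /\ map h e.2 = val e'.2.

Definition hom_equiv k (e e' : data_example k) : Prop :=
  (exists h, is_hom h e e') /\ (exists h, is_hom h e' e).

Definition sub_example k (e' e : data_example k) : Prop :=
  e'.1 `<=` e.1 /\ e'.2 = e.2.

Definition is_core k (c e : data_example k) : Prop :=
  sub_example c e /\ hom_equiv c e /\
  forall c', sub_example c' c -> hom_equiv c' e -> c'.1 = c.1.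

Definition symdiff_card (A B : instance) : nat := #|` (A `\` B) `|` (B `\` A)|.

Definition renaming k (q1 q2 : CQ k) (rho : nat -> nat) : Prop :=
  (forall x y, cq_vars q2 x -> cq_vars q2 y -> rho x = rho y -> x = y) /\
  map rho (cq_head q2) = val (cq_head q1).

Definition renamed_example k (q1 q2 : CQ k) (rho : nat -> nat) : data_example k :=
  ([fset (a.1, map rho a.2) | a in cq_body q2], cq_head q1).

(* d is an achievable value |core(e_q1) (+) core(e_rho(q2))| ; cores are only
   unique up to isomorphism, so we range over every choice of core
   (this does not change the minimum) *)
Definition edit_value k (q1 q2 : CQ k) (d : nat) : Prop :=
  exists rho c1 c2,
    renaming q1 q2 rho /\
    is_core c1 (canonical_example q1) /\
    is_core c2 (renamed_example q1 q2 rho) /\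
    d = symdiff_card c1.1 c2.1.

Definition is_edit_dist k (q1 q2 : CQ k) (d : nat) : Prop :=
  edit_value q1 q2 d /\ forall d', edit_value q1 q2 d' -> d <= d'.

Definition edit_dist k (q1 q2 : CQ k) : nat :=
  epsilon (inhabits 0) (is_edit_dist q1 q2).

Definition cq_answer k (q : CQ k) (I : instance) (t : seq nat) : Prop :=
  exists h : nat -> nat, is_hom h (canonical_example q) (I, [tuple of map h (cq_head q)]) /\
    t = map h (cq_head q).

Definition cq_equiv k (q q' : CQ k) : Prop :=
  forall (I : instance) (t : seq nat), cq_answer q I t <-> cq_answer q' I t.

Definition proximity := forall k, CQ k -> CQ k -> CQ k -> Prop.

Definition edit_dist_order : proximity :=
  fun k q q' q'' => edit_dist q q' <= edit_dist q q''.

Definition strictly_below (P : proximity) k (q q' q'' : CQ k) : Prop :=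
  P k q q' q'' /\ ~ P k q q'' q'.

Definition is_minimal (P : proximity) k (q : CQ k) (S : CQ k -> Prop) (m : CQ k) : Prop :=
  S m /\ forall q', S q' -> ~ strictly_below P q q' m.

Definition well_founded_prox (P : proximity) : Prop :=
  forall k (q : CQ k) (S : CQ k -> Prop), (exists q', S q') ->
    exists m, is_minimal P q S m.

Definition finite_basis (P : proximity) : Prop :=
  forall k (q : CQ k) (S : CQ k -> Prop),
    exists L : seq (CQ k), forall m, is_minimal P q S m ->
      exists2 m', List.In m' L & cq_equiv m m'.

End CQs.

From HB Require Import structures.
From mathcomp Require Import all_boot finmap.
From Stdlib Require Import Classical ClassicalEpsilon.

Set Implicit Arguments.
Unset Strict Implicit.
Unset Printing Implicit Defensive.

(* Edit distances are natural numbers, so every nonempty set of CQs contains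
   one at least distance from q, and all minimal elements of a set lie at the
   same distance d.  A CQ m at distance d from q is equivalent to the core c of
   a renaming of m; c has the head of q and at most |q| + d facts.  Renaming the
   remaining variables of c into an initial segment above the head variables of
   q yields an equivalent example whose facts come from a finite set fixed by q
   and d, so the minimal elements fall into finitely many equivalence classes. *)

Lemma ex_minimizer (T : Type) (f : T -> nat) (P : T -> Prop) :
  (exists x, P x) -> exists2 x, P x & forall y, P y -> f x <= f y.
Proof.
move=> [x0 Px0].
suff /(_ (f x0)) : forall n, (exists2 x, P x & f x = n) ->
    exists2 x, P x & forall y, P y -> f x <= f y by apply; exists x0.
elim/ltn_ind=> n IH [x Px fx]; subst n.
have [[y Py lt_yx] | no_smaller] := classic (exists2 y, P y & f y < f x).
  exact: IH lt_yx (ex_intro2 _ _ y Py erefl).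
exists x => // y Py; rewrite leqNgt; apply/negP => lt_yx.
by apply: no_smaller; exists y.
Qed.

Section Homomorphisms.
Variables (sig : schema) (k : nat).
Implicit Types e : data_example sig k.

Lemma hom_id e : is_hom id e e.
Proof. by split=> [a|]; rewrite map_id //; case: a. Qed.

Lemma hom_comp e1 e2 e3 h g :
  is_hom h e1 e2 -> is_hom g e2 e3 -> is_hom (g \o h) e1 e3.
Proof.
move=> [hI ht] [gI gt]; split=> [a /hI /gI|]; rewrite map_comp //.
by rewrite ht.
Qed.

Lemma hom_equiv_refl e : hom_equiv e e.
Proof. by split; exists id; apply: hom_id. Qed.

Lemma hom_equiv_sym e1 e2 : hom_equiv e1 e2 -> hom_equiv e2 e1.
Proof. by case. Qed.

Lemma hom_equiv_trans e1 e2 e3 :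
  hom_equiv e1 e2 -> hom_equiv e2 e3 -> hom_equiv e1 e3.
Proof.
move=> [[h1 H1] [g1 G1]] [[h2 H2] [g2 G2]].
by split; [exists (h2 \o h1); apply: hom_comp H1 H2
          | exists (g1 \o g2); apply: hom_comp G2 G1].
Qed.

Lemma cq_equiv_of_hom_equiv (q q' : CQ sig k) :
  hom_equiv (canonical_example q) (canonical_example q') -> cq_equiv q q'.
Proof.
have answer_hom (q1 q2 : CQ sig k) g I t :
    is_hom g (canonical_example q2) (canonical_example q1) ->
    cq_answer q1 I t -> cq_answer q2 I t.
  move=> [gI gt] [h [[hI _] ->]]; exists (h \o g).
  split; last by rewrite map_comp gt.
  by split=> // a /gI /hI; rewrite map_comp.
by move=> [[f F] [g G]] I t; split; [exact: answer_hom G | exact: answer_hom F].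
Qed.

Lemma exists_core e : exists c, is_core c e.
Proof.
have [c [c_sub c_equiv] c_least] :=
  @ex_minimizer _ (fun c => #|` c.1|) (fun c => sub_example c e /\ hom_equiv c e)
    (ex_intro _ e (conj (conj (fsubset_refl _) erefl) (hom_equiv_refl e))).
exists c; split=> //; split=> // c' [c'_sub c't] c'_equiv.
apply/eqP; rewrite eqEfcard c'_sub c_least //; case: c_sub => sub ct.
by split=> //; split; [apply: fsubset_trans sub | rewrite c't].
Qed.

End Homomorphisms.

Section Renaming.
Variables (sig : schema) (k : nat).
Implicit Types (I : instance sig) (t : k.-tuple nat) (f : nat -> nat).

Definition adom I : seq nat := flatten [seq a.2 | a <- I].

Lemma adomP I x : reflect (exists2 a, a \in I & x \in a.2) (x \in adom I).
Proof. exact: flatten_mapP. Qed.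

Lemma size_adom I n : {in I, forall a, size a.2 <= n} -> size (adom I) <= #|` I| * n.
Proof.
move=> le_n; rewrite size_flatten /shape -map_comp sumnE big_map.
apply: (@leq_trans (\sum_(a <- I) n)).
  by rewrite big_seq [leqRHS]big_seq; apply: leq_sum.
by rewrite big_const_seq count_predT iter_addn_0 mulnC.
Qed.

Definition rename_facts f I : instance sig := [fset (a.1, map f a.2) | a in I]%fset.

Lemma wf_rename_facts f I a :
  {in I, forall b, wf_fact b} -> a \in rename_facts f I -> wf_fact a.
Proof. by move=> wfI /imfsetP [b bI ->]; rewrite /wf_fact size_map; apply: wfI. Qed.

Lemma hom_rename f I t t' : map f t = val t' -> is_hom f (I, t) (rename_facts f I, t').
Proof. by split=> // a aI; apply/imfsetP; exists a. Qed.

Lemma hom_rename_cancel f g I t t' :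
  {in t ++ adom I, cancel f g} -> map f t = val t' ->
  is_hom g (rename_facts f I, t') (I, t).
Proof.
move=> fK ft; split=> [_ /imfsetP [a aI ->]|] /=.
  rewrite -map_comp map_id_in; first by case: a aI.
  by move=> x xa; apply: fK; rewrite mem_cat; apply/orP; right; apply/adomP; exists a.
by rewrite -ft -map_comp map_id_in // => x xt; apply: fK; rewrite mem_cat xt.
Qed.

Lemma hom_equiv_rename f I t t' :
  {in t ++ adom I &, injective f} -> map f t = val t' ->
  hom_equiv (I, t) (rename_facts f I, t').
Proof.
set s := t ++ adom I => f_inj ft.
split; [exists f; exact: hom_rename | exists (fun y => nth 0 s (index y (map f s)))].
by apply: hom_rename_cancel ft => x xs; apply: nth_index_map.
Qed.

Lemma compress_example I t : exists f,
  hom_equiv (I, t) (rename_facts f I, t) /\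
  {in adom I, forall x, f x < (\max_(y <- t) y).+1 + size (adom I)}.
Proof.
set B := (\max_(y <- t) y).+1.
have t_lt y : y \in t -> y < B by move=> yt; rewrite ltnS; apply: leq_bigmax_seq.
pose f x := if x \in t then x else B + index x (adom I).
have f_lt x : x \in adom I -> f x < B + size (adom I).
  rewrite /f; case: ifP => [xt _ | _ xI]; first exact: ltn_addr (t_lt x xt).
  by rewrite ltn_add2l index_mem.
exists f; split=> //; apply: hom_equiv_rename; last first.
  by rewrite map_id_in // => x; rewrite /f => ->.
move=> x y; rewrite !mem_cat /f.
case xt: (x \in t); case yt: (y \in t) => //= xI yI.
- by move=> eq_xy; have := t_lt x xt; rewrite eq_xy ltnNge leq_addr.
- by move=> eq_xy; have := t_lt y yt; rewrite -eq_xy ltnNge leq_addr.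
- by move/addnI=> eq_i; rewrite -(nth_index 0 xI) eq_i nth_index.
Qed.

End Renaming.

Section Queries.
Variables (sig : schema) (k : nat).
Implicit Types q m : CQ sig k.

Lemma cq_head_adom m : {subset cq_head m <= adom (cq_body m)}.
Proof. by move=> x /cq_head_occ ?; apply/adomP. Qed.

Lemma renaming_exists q m : exists rho, renaming q m rho.
Proof.
set tq := val (cq_head q); set tm := val (cq_head m).
set B := (\max_(y <- tq) y).+1.
have size_tm : size tm = size tq by rewrite !size_tuple.
(* Non-head variables are shifted above every head variable of q. *)
pose rho x := if x \in tm then nth 0 tq (index x tm) else (B + x)%N.
have rho_lt x : x \in tm -> rho x < B.
  move=> xm; rewrite /rho xm ltnS; apply: leq_bigmax_seq => //.
  by rewrite mem_nth // -size_tm index_mem.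
exists rho; split; last first.
  apply: (@eq_from_nth _ 0); rewrite size_map // => i lt_i.
  by rewrite (nth_map 0) // /rho mem_nth // index_uniq // (cq_head_uniq m).
move=> x y _ _; have [xm | xm] := boolP (x \in tm); have [ym | ym] := boolP (y \in tm).
- move=> /eqP; rewrite /rho xm ym nth_uniq ?(cq_head_uniq q) -?size_tm ?index_mem //.
  by move=> /eqP eq_i; rewrite -(nth_index 0 xm) eq_i nth_index.
- by move=> eq_xy; have := rho_lt x xm; rewrite eq_xy /rho (negPf ym) ltnNge leq_addr.
- by move=> eq_xy; have := rho_lt y ym; rewrite -eq_xy /rho (negPf xm) ltnNge leq_addr.
- by rewrite /rho (negPf xm) (negPf ym) => /addnI.
Qed.

Lemma renaming_hom_equiv q m rho :
  renaming q m rho -> hom_equiv (canonical_example m) (renamed_example q m rho).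
Proof.
have vars x : x \in cq_head m ++ adom (cq_body m) -> cq_vars m x.
  by rewrite mem_cat => /orP [/cq_head_adom|] /adomP.
move=> [rho_inj rho_head]; apply: hom_equiv_rename rho_head => x y /vars ? /vars.
exact: rho_inj.
Qed.

Lemma edit_dist_spec q m : edit_value q m (edit_dist q m).
Proof.
have [d d_val d_least] : exists2 d, edit_value q m d & forall d', edit_value q m d' -> d <= d'.
  apply: (ex_minimizer id); have [rho rho_ren] := renaming_exists q m.
  have [c1 c1_core] := exists_core (canonical_example q).
  have [c2 c2_core] := exists_core (renamed_example q m rho).
  by exists (symdiff_card c1.1 c2.1), rho, c1, c2.
by case: (epsilon_spec (inhabits 0) (is_edit_dist q m) (ex_intro _ d (conj d_val d_least))).
Qed.

End Queries.

Fixpoint words (n : nat) (l : seq nat) : seq (seq nat) :=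
  if n is n'.+1 then [seq x :: s | x <- l, s <- words n' l] else [:: [::]].

Lemma mem_words n l s : size s = n -> {subset s <= l} -> s \in words n l.
Proof.
elim: n s => [|n IH] [|x s] //= [size_s] s_l.
apply: allpairs_f; first by apply: s_l; apply: mem_head.
by apply: IH => // y ys; apply: s_l; rewrite in_cons ys orbT.
Qed.

Lemma mem_In (T : eqType) (x : T) s : x \in s -> List.In x s.
Proof. by elim: s => //= y s IH; rewrite in_cons => /predU1P [->|/IH]; [left | right]. Qed.

Lemma card_le_symdiff (sig : schema) (A B : instance sig) :
  #|` B| <= #|` A| + symdiff_card A B.
Proof.
apply: leq_trans (leq_card_fsetU A _); apply: fsubset_leq_card.
by apply/fsubsetP => x xB; rewrite !in_fsetU !in_fsetD xB /=; case: (x \in A).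
Qed.

Section Keys.
Variables (sig : schema) (k : nat).

Definition facts_below (N : nat) : seq (fact sig) :=
  [seq (r, s) | r <- enum (rsym sig), s <- words (arity r) (iota 0 N)].

Definition instances_below (N : nat) : {fset instance sig} :=
  fpowerset (seq_fset tt (facts_below N)).

Lemma mem_instances_below N (K : instance sig) :
  {in K, forall a, wf_fact a /\ {in a.2, forall x, x < N}} -> K \in instances_below N.
Proof.
move=> K_below; rewrite fpowersetE; apply/fsubsetP => -[r s] /K_below [wf_rs s_lt].
rewrite seq_fsetE; apply/allpairsPdep; exists r, s; split; rewrite ?mem_enum //.
by apply: mem_words => // x /s_lt; rewrite mem_iota.
Qed.

Definition key_bound (q : CQ sig k) (d : nat) : nat :=
  (\max_(y <- cq_head q) y).+1 + (#|` cq_body q| + d) * \max_(r : rsym sig) arity r.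

Lemma edit_value_key (q m : CQ sig k) d : edit_value q m d ->
  exists2 K, K \in instances_below (key_bound q d) &
    hom_equiv (canonical_example m) (K, cq_head q).
Proof.
move=> [rho [c1 [c2 [rho_ren [[[c1_sub _] _] [[[c2_sub c2_head] [c2_equiv _]] ->]]]]]].
have c2_wf : {in c2.1, forall a, wf_fact a}.
  by move=> a /(fsubsetP c2_sub); apply: wf_rename_facts (@cq_body_wf _ _ m).
have [f [f_equiv f_lt]] := compress_example c2.1 (cq_head q).
exists (rename_facts f c2.1).
  apply: mem_instances_below => a aK; split; first exact: wf_rename_facts c2_wf aK.
  case/imfsetP: aK => b bc2 -> x /mapP [y yb ->].
  apply: leq_trans (f_lt y _) _; first by apply/adomP; exists b.
  rewrite leq_add2l; apply: leq_trans (size_adom (n := \max_(r : rsym sig) arity r) _) _.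
    by move=> b' /c2_wf ->; apply: leq_bigmax.
  rewrite leq_mul2r; apply/orP; right.
  apply: leq_trans (card_le_symdiff c1.1 _) _; rewrite leq_add2r.
  exact: fsubset_leq_card.
apply: hom_equiv_trans (renaming_hom_equiv rho_ren) _.
apply: hom_equiv_trans (hom_equiv_sym c2_equiv) _.
by move: f_equiv; case: c2 c2_head {c2_sub c2_equiv c2_wf f_lt} => I t /= ->.
Qed.

End Keys.

Lemma edit_dist_minimalP (sig : schema) k (q : CQ sig k) S m :
  is_minimal (@edit_dist_order sig) q S m <->
  S m /\ forall m', S m' -> edit_dist q m <= edit_dist q m'.
Proof.
rewrite /is_minimal /strictly_below /edit_dist_order.
split=> -[Sm m_min]; split=> // m' Sm'; last by case=> _; apply; apply: m_min.
rewrite leqNgt; apply/negP => lt_m'm; apply: (m_min m' Sm').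
by split; [exact: ltnW | rewrite leqNgt lt_m'm].
Qed.

Lemma finite_basis_of_keys (sig : schema) (P : proximity sig) k (q : CQ sig k) S
    (keys : seq (data_example sig k)) :
  (forall m, is_minimal P q S m -> exists2 e, e \in keys & hom_equiv (canonical_example m) e) ->
  exists L, forall m, is_minimal P q S m -> exists2 m', List.In m' L & cq_equiv m m'.
Proof.
move=> keyed.
pose keyed_by e m' := is_minimal P q S m' /\ hom_equiv (canonical_example m') e.
pose pick e := epsilon (inhabits q) (keyed_by e).
exists (map pick keys) => m /[dup] m_min /keyed [e e_key m_e].
exists (pick e); first exact/List.in_map/mem_In.
have [_ pick_e] := epsilon_spec (inhabits q) (keyed_by e) (ex_intro _ m (conj m_min m_e)).
exact/cq_equiv_of_hom_equiv/(hom_equiv_trans m_e (hom_equiv_sym pick_e)).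
Qed.

Theorem proposition34 (sig : schema) :
  well_founded_prox (@edit_dist_order sig) /\ finite_basis (@edit_dist_order sig).
Proof.
split=> [k q S S_ne | k q S].
  have [m Sm m_least] := ex_minimizer (edit_dist q) S_ne.
  by exists m; apply/edit_dist_minimalP.
have [[m0 /edit_dist_minimalP [Sm0 m0_least]] | no_min] :=
  classic (exists m0, is_minimal (@edit_dist_order sig) q S m0); last first.
  apply: (@finite_basis_of_keys _ _ _ _ _ [::]) => m m_min.
  by case: no_min; exists m.
pose d := edit_dist q m0.
apply: (@finite_basis_of_keys _ _ _ _ _
  [seq (K, cq_head q) | K <- instances_below _ (key_bound q d)]).
move=> m /edit_dist_minimalP [Sm m_least].
have d_eq : edit_dist q m = d by apply/eqP; rewrite eqn_leq m_least ?m0_least.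
have := edit_dist_spec q m; rewrite d_eq => /edit_value_key [K K_below m_K].
by exists (K, cq_head q); first exact: map_f.
Qed.
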